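(* Let $n\ge 2$ be an integer, let $A$ be a complex Banach algebra, and let $p\in(0,1)$, $\theta\in[0,\infty)$ be real numbers. Suppose $f:A\to A$ satisfies $$\Big\|\mu f\Big(\frac{x+y}{2}\Big)+\mu f\Big(\frac{x-y}{2}\Big)-f(\mu x)+f(a^n)-\big(f(a)a^{n-1}+af(a)a^{n-2}+\cdots+a^{n-2}f(a)a+a^{n-1}f(a)\big)\Big\|\le \theta(\|x\|^p+\|y\|^p+\|a\|^p)$$ for all $\mu\in\mathbb{T}$ and all $x,y,a\in A$. Then there exists a unique $n$-Jordan derivation $D:A\to A$ such that $$\|f(x)-D(x)\|\le \frac{2^p\theta}{2-2^p}\|x\|^p$$ for all $x\in A$.
   Context: $\mathbb{T}=\{\mu\in\mathbb{C}:|\mu|=1\}$. For an integer $n\ge 2$, an $n$-Jordan derivation on an algebra $A$ is a linear map $D:A\to A$ such that $D(a^n)=D(a)a^{n-1}+aD(a)a^{n-2}+\cdots+a^{n-2}D(a)a+a^{n-1}D(a)$ for all $a\in A$. *)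

From HB Require Import structures.
From mathcomp Require Import all_boot all_order all_algebra.
From mathcomp Require Import all_classical all_reals all_analysis.
From mathcomp Require Import complex.
Set Implicit Arguments. Unset Strict Implicit. Unset Printing Implicit Defensive.
Import Order.TTheory GRing.Theory Num.Theory.
Local Open Scope ring_scope.

(* In MathComp-Analysis the norm of a
   normedModType over R[i] takes values in R[i] (it is always real and
   nonnegative); [nrm] is its real part, i.e. the usual real-valued norm. *)

Definition nrm (R : realType) (A : normedModType R[i]) (x : A) : R :=
  complex.Re `|x|.

Definition banach_algebra_mul (R : realType) (A : completeNormedModType R[i])
    (mul : A -> A -> A) : Prop :=
  (forall x y z, mul x (mul y z) = mul (mul x y) z) /\
  [/\ (forall x y z, mul (x + y) z = mul x z + mul y z),
      (forall x y z, mul x (y + z) = mul x y + mul x z),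
      (forall (c : R[i]) x y, mul (c *: x) y = c *: mul x y),
      (forall (c : R[i]) x y, mul x (c *: y) = c *: mul x y)
    & (forall x y, nrm (mul x y) <= nrm x * nrm y)].

(* a^k * y (with a^0 * y = y) and y * a^k (with y * a^0 = y); these avoid
   needing a unit for a^0 in a possibly non-unital algebra. *)
Definition lpow (A : Type) (mul : A -> A -> A) (a : A) (k : nat) (y : A) : A :=
  iter k (mul a) y.
Definition rpow (A : Type) (mul : A -> A -> A) (a : A) (k : nat) (y : A) : A :=
  iter k (fun z => mul z a) y.

Definition apow (A : Type) (mul : A -> A -> A) (a : A) (n : nat) : A :=
  lpow mul a n.-1 a.

Definition jordan_sum (R : realType) (A : completeNormedModType R[i])
    (mul : A -> A -> A) (n : nat) (D : A -> A) (a : A) : A :=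
  \sum_(i < n) lpow mul a i (rpow mul a (n - 1 - i) (D a)).

Definition n_jordan_derivation (R : realType) (A : completeNormedModType R[i])
    (mul : A -> A -> A) (n : nat) (D : A -> A) : Prop :=
  (forall (c : R[i]) x y, D (c *: x + y) = c *: D x + D y) /\
  (forall a, D (apow mul a n) = jordan_sum mul n D a).

(* Hyers' direct method.  Taking [a = 0] and [x = y] in the hypothesis gives
   [||f (2y) - 2 f y|| <= theta ||2y||^p], so [2^-k f (2^k x)] is Cauchy, its
   successive differences being bounded by [theta ||x||^p] times powers of
   [ratio = 2^(p-1) < 1]; summing the geometric series, its limit [D] lies
   within [2^p theta / (2 - 2^p) ||x||^p] of [f].  An approximate identity of
   [f] whose error is homogeneous of degree [p < 1] becomes exact for [D]:
   rescaling the variables by [2^k] divides the error by [2^(k(1-p))].  Thus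
   [D] is additive and [T]-homogeneous, hence [C]-linear since every real is a
   natural multiple of a sum of two unimodular numbers.  For the Jordan
   identity, replacing [a] by [2^k a] multiplies both sides by [2^(kn)] and the
   error only by [2^(kp)].  Uniqueness follows in the same way: two such linear
   maps differ at [x] by [2^-k] times their difference at [2^k x], which is at
   most twice the bound above. *)

From HB Require Import structures.
From mathcomp Require Import all_boot all_order all_algebra.
From mathcomp Require Import all_classical all_reals all_analysis.
From mathcomp Require Import complex.
From mathcomp Require Import zify ring lra.
Set Implicit Arguments. Unset Strict Implicit. Unset Printing Implicit Defensive.
Import Order.TTheory GRing.Theory Num.Theory.
Local Open Scope ring_scope.
Local Open Scope complex_scope.
Local Open Scope classical_set_scope.

Section RealValuedNorm.
Variables (R : realType) (A : completeNormedModType R[i]).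
Implicit Types (x y z : A) (r : R).

Lemma normE_nrm x : `|x| = (nrm x)%:C.
Proof.
have := normr_ge0 x; rewrite lecE /= => /andP[/eqP im0 _].
by rewrite /nrm; case: (`|x|) im0 => a b /= ->.
Qed.

Lemma nrm_ge0 x : 0 <= nrm x.
Proof. by have := normr_ge0 x; rewrite normE_nrm lecR. Qed.

Lemma nrm0 : nrm (0 : A) = 0.
Proof. by rewrite /nrm normr0. Qed.

Lemma nrmN x : nrm (- x) = nrm x.
Proof. by rewrite /nrm normrN. Qed.

Lemma nrm_distC x y : nrm (x - y) = nrm (y - x).
Proof. by rewrite /nrm distrC. Qed.

Lemma nrmD x y : nrm (x + y) <= nrm x + nrm y.
Proof. by have := ler_normD x y; rewrite !normE_nrm -rmorphD lecR. Qed.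

Lemma nrmD3 x y z : nrm (x + y + z) <= nrm x + nrm y + nrm z.
Proof. by apply: le_trans (nrmD _ _) _; rewrite lerD2r nrmD. Qed.

Lemma nrmZ_real r x : nrm (r%:C *: x) = `|r| * nrm x.
Proof.
have := normrZ r%:C x; rewrite !normE_nrm normc_def /= expr0n /= addr0.
by rewrite sqrtr_sqr -rmorphM => -[].
Qed.

Lemma nrm_le0 x : nrm x <= 0 -> x = 0.
Proof.
move=> le0; apply/normr0_eq0; rewrite normE_nrm.
by have -> : nrm x = 0 by apply/eqP; rewrite eq_le le0 nrm_ge0.
Qed.

Lemma nrm_sum m (F : 'I_m -> A) : nrm (\sum_(i < m) F i) <= \sum_(i < m) nrm (F i).
Proof.
elim/big_rec2: _ => [|i y x _ IH]; first by rewrite nrm0.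
by apply: le_trans (nrmD _ _) _; rewrite lerD2l.
Qed.

Lemma cvg_nrm_lt (u : nat -> A) l : u @ \oo --> l ->
  forall e : R, 0 < e -> exists N, forall m, (N <= m)%N -> nrm (u m - l) < e.
Proof.
move=> /cvgr_distC_lt ul e e0; have [|N _ uN] := ul e%:C; first by rewrite ltcR.
by exists N => m Nm; have := uN m Nm; rewrite normE_nrm ltcR.
Qed.

Lemma nrm_cauchy_cvg (u : nat -> A) :
  (forall e : R, 0 < e -> exists N, forall m, (N <= m)%N -> nrm (u m - u N) < e) ->
  u @ \oo --> lim (u @ \oo).
Proof.
move=> u_cauchy; apply: cauchy_cvg; apply: cauchy_exP => e e0.
have eRe : e = (complex.Re e)%:C.
  by move: e0; case: e => a b; rewrite ltcE /= => /andP[/eqP -> _].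
have Re0 : 0 < complex.Re e by move: e0; rewrite ltcE => /andP[].
have [N uN] := u_cauchy _ Re0.
exists (u N); rewrite /fmapE -ball_normE /ball_; exists N => // m Nm /=.
by rewrite eRe distrC normE_nrm ltcR; apply: uN.
Qed.

Lemma nrm_lim_le (u : nat -> A) l a m (B : R) : u @ \oo --> l ->
  (forall j, (m <= j)%N -> nrm (u j - a) <= B) -> nrm (l - a) <= B.
Proof.
move=> ul uB; apply/ler_addgt0Pr => e e0.
have [N uN] := cvg_nrm_lt ul e0.
have -> : l - a = - (u (maxn m N) - l) + (u (maxn m N) - a) by rewrite opprB addrA subrK.
apply: le_trans (nrmD _ _) _; rewrite nrmN addrC.
by apply: lerD; [apply: uB; rewrite leq_maxl | apply/ltW/uN; rewrite leq_maxr].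
Qed.

Lemma geometric_lt (q C e : R) : 0 <= q < 1 -> 0 <= C -> 0 < e ->
  exists N, forall m, (N <= m)%N -> C * q ^+ m < e.
Proof.
move=> /andP[q0 q1] C0 e0.
have eC : 0 < e / (C + 1) by rewrite divr_gt0 // ltr_wpDl.
have q1' : `|q| < 1 by rewrite ger0_norm.
move: (cvg_expr q1') => /cvgr_dist_lt /(_ _ eC) [N _ qN].
exists N => m /qN /=; rewrite sub0r normrN ger0_norm ?exprn_ge0 //.
rewrite ltr_pdivlMr ?ltr_wpDl // => qm; apply: le_lt_trans qm.
by rewrite mulrC ler_wpM2l ?exprn_ge0 // lerDl.
Qed.

Lemma eq0_of_geometric_bound z (q C : R) : 0 <= q < 1 -> 0 <= C ->
  (forall k, nrm z <= C * q ^+ k) -> z = 0.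
Proof.
move=> q01 C0 zq; apply: nrm_le0; apply/ler_addgt0Pr => e e0; rewrite add0r.
have [N qN] := geometric_lt q01 C0 e0.
exact: le_trans (zq N) (ltW (qN N (leqnn N))).
Qed.

Lemma lim_eq0_of_geometric_bound (u : nat -> A) l (q C : R) : u @ \oo --> l ->
  0 <= q < 1 -> 0 <= C -> (forall k, nrm (u k) <= C * q ^+ k) -> l = 0.
Proof.
move=> ul q01 C0 uq; apply: (eq0_of_geometric_bound q01 C0) => k.
rewrite -[l]subr0; apply: (nrm_lim_le (m := k) ul) => j kj; rewrite subr0.
apply: le_trans (uq j) _; rewrite ler_wpM2l //.
by case/andP: q01 => q0 q1; exact: (ler_wiXn2l q0 (ltW q1) kj).
Qed.

End RealValuedNorm.

Section Unimodular.
Variable R : realType.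

Lemma real_eq_natmul_unit_sum (r : R) : exists (m : nat) (u v : R[i]),
  [/\ `|u| = 1, `|v| = 1 & r%:C = m%:R * (u + v)].
Proof.
set m := Num.Def.archi_bound `|r|.
have rm : `|r| < m%:R := archi_boundP (normr_ge0 r).
have m0 : (0 : R) < m%:R by apply: le_lt_trans rm.
set t := r / m%:R / 2.
have t2 : t ^+ 2 <= 1.
  have tle1 : `|t| <= 1.
    rewrite /t !normrM !normrV ?unitfE ?pnatr_eq0 ?gt_eqF // !normr_nat.
    by rewrite ler_pdivrMr // mul1r ler_pdivrMr //; lra.
  by rewrite -real_normK ?num_real // expr2; have := normr_ge0 t; nra.
have unit_t (s : R) : s ^+ 2 = 1 - t ^+ 2 -> `|t +i* s| = 1.
  by move=> s2; rewrite normc_def /= s2 addrC subrK sqrtr1.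
exists m, (t +i* Num.sqrt (1 - t ^+ 2)), (t +i* - Num.sqrt (1 - t ^+ 2)).
split; try by apply: unit_t; rewrite ?sqrrN sqr_sqrtr ?subr_ge0.
have -> : (t +i* Num.sqrt (1 - t ^+ 2)) + (t +i* - Num.sqrt (1 - t ^+ 2)) = (t + t)%:C.
  by apply/eqP; rewrite eq_complex /= subrr !eqxx.
by rewrite -(rmorph_nat (real_complex R)) -rmorphM /t; congr _%:C; field; rewrite gt_eqF.
Qed.

Lemma linear_of_additive_unit_homogeneous (V W : lmodType R[i]) (L : V -> W) :
  {morph L : x y / x + y} -> (forall mu x, `|mu| = 1 -> L (mu *: x) = mu *: L x) ->
  forall (c : R[i]) x y, L (c *: x + y) = c *: L x + L y.
Proof.
move=> L_add L_unit.
have L0 : L 0 = 0 by apply: (addrI (L 0)); rewrite -L_add !addr0.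
have L_nat k x : L (k%:R *: x) = k%:R *: L x.
  by elim: k => [|k IH]; rewrite ?scale0r ?L0 // mulrSr !scalerDl !scale1r L_add IH.
have L_real r x : L (r%:C *: x) = r%:C *: L x.
  have [m [u [v [u1 v1 ->]]]] := real_eq_natmul_unit_sum r.
  by rewrite -!scalerA L_nat !scalerDl L_add !L_unit.
move=> [a b] x y; rewrite L_add; congr (_ + _).
have i1 : `|'i : R[i]| = 1 by rewrite normc_def /= expr0n /= add0r expr1n sqrtr1.
have -> : a +i* b = a%:C + 'i * b%:C by simpc.
by rewrite !scalerDl L_add -!scalerA L_real L_unit // L_real.
Qed.

Lemma scalable_of_linear (V W : lmodType R[i]) (L : V -> W) :
  (forall (c : R[i]) x y, L (c *: x + y) = c *: L x + L y) ->
  forall (c : R[i]) x, L (c *: x) = c *: L x.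
Proof.
move=> L_lin; have L0 : L 0 = 0.
  have := L_lin 1 0 0; rewrite scaler0 addr0 scale1r => L00.
  by apply: (addrI (L 0)); rewrite -L00 addr0.
by move=> c x; have := L_lin c x 0; rewrite !addr0 L0 addr0.
Qed.

End Unimodular.

Section BanachAlgebra.
Variables (R : realType) (A : completeNormedModType R[i]) (mul : A -> A -> A).
Hypothesis mul_banach : banach_algebra_mul mul.
Implicit Types (a u v : A) (c : R[i]).

Lemma bmulDl a u v : mul (a + u) v = mul a v + mul u v. Proof. by case: mul_banach => _ []. Qed.
Lemma bmulDr a u v : mul a (u + v) = mul a u + mul a v. Proof. by case: mul_banach => _ []. Qed.
Lemma bmulZl c u v : mul (c *: u) v = c *: mul u v. Proof. by case: mul_banach => _ []. Qed.
Lemma bmulZr c u v : mul u (c *: v) = c *: mul u v. Proof. by case: mul_banach => _ []. Qed.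
Lemma nrm_bmul u v : nrm (mul u v) <= nrm u * nrm v. Proof. by case: mul_banach => _ []. Qed.
Lemma bmul0l v : mul 0 v = 0. Proof. by have := bmulZl 0 0 v; rewrite !scale0r. Qed.
Lemma bmul0r u : mul u 0 = 0. Proof. by have := bmulZr 0 u 0; rewrite !scale0r. Qed.

Lemma lpowS a k u : lpow mul a k.+1 u = mul a (lpow mul a k u). Proof. by []. Qed.
Lemma rpowS a k u : rpow mul a k.+1 u = mul (rpow mul a k u) a. Proof. by []. Qed.

Lemma lpowD a k u v : lpow mul a k (u + v) = lpow mul a k u + lpow mul a k v.
Proof. by elim: k => // k IH; rewrite !lpowS IH bmulDr. Qed.
Lemma rpowD a k u v : rpow mul a k (u + v) = rpow mul a k u + rpow mul a k v.
Proof. by elim: k => // k IH; rewrite !rpowS IH bmulDl. Qed.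
Lemma lpowZ a k c u : lpow mul a k (c *: u) = c *: lpow mul a k u.
Proof. by elim: k => // k IH; rewrite !lpowS IH bmulZr. Qed.
Lemma rpowZ a k c u : rpow mul a k (c *: u) = c *: rpow mul a k u.
Proof. by elim: k => // k IH; rewrite !rpowS IH bmulZl. Qed.
Lemma lpow0 a k : lpow mul a k 0 = 0.
Proof. by elim: k => // k IH; rewrite lpowS IH bmul0r. Qed.

Lemma lpowZbase a k c u : lpow mul (c *: a) k u = c ^+ k *: lpow mul a k u.
Proof.
elim: k => [|k IH]; first by rewrite scale1r.
by rewrite !lpowS IH bmulZl bmulZr scalerA exprS.
Qed.
Lemma rpowZbase a k c u : rpow mul (c *: a) k u = c ^+ k *: rpow mul a k u.
Proof.
elim: k => [|k IH]; first by rewrite scale1r.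
by rewrite !rpowS IH bmulZl bmulZr scalerA exprSr.
Qed.

Lemma nrm_lpow a k u : nrm (lpow mul a k u) <= nrm a ^+ k * nrm u.
Proof.
elim: k => [|k IH]; first by rewrite mul1r.
rewrite lpowS exprS -mulrA; apply: le_trans (nrm_bmul _ _) _.
by apply: ler_wpM2l; first exact: nrm_ge0.
Qed.
Lemma nrm_rpow a k u : nrm (rpow mul a k u) <= nrm a ^+ k * nrm u.
Proof.
elim: k => [|k IH]; first by rewrite mul1r.
rewrite rpowS exprSr mulrAC; apply: le_trans (nrm_bmul _ _) _.
by apply: ler_wpM2r; first exact: nrm_ge0.
Qed.

Variable n : nat.

(* [jordan_sum mul n D a] is convertible to [jordan_map a (D a)]. *)
Definition jordan_map a v := \sum_(i < n) lpow mul a i (rpow mul a (n - 1 - i) v).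

Lemma jordan_mapD a u v : jordan_map a (u + v) = jordan_map a u + jordan_map a v.
Proof. by rewrite /jordan_map -big_split; apply: eq_bigr => i _; rewrite rpowD lpowD. Qed.
Lemma jordan_mapZ a c v : jordan_map a (c *: v) = c *: jordan_map a v.
Proof. by rewrite /jordan_map scaler_sumr; apply: eq_bigr => i _; rewrite rpowZ lpowZ. Qed.
Lemma jordan_mapB a u v : jordan_map a (u - v) = jordan_map a u - jordan_map a v.
Proof. by rewrite jordan_mapD -scaleN1r jordan_mapZ scaleN1r. Qed.
Lemma nrm_jordan_map a v : nrm (jordan_map a v) <= n%:R * nrm a ^+ (n - 1) * nrm v.
Proof.
apply: le_trans (nrm_sum _) _.
have -> : n%:R * nrm a ^+ (n - 1) * nrm v = \sum_(i < n) nrm a ^+ (n - 1) * nrm v.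
  by rewrite sumr_const card_ord -mulrA mulr_natl.
apply: ler_sum => i _; apply: le_trans (nrm_lpow _ _ _) _.
apply: le_trans (ler_wpM2l (exprn_ge0 _ (nrm_ge0 _)) (nrm_rpow _ _ _)) _.
by rewrite mulrA -exprD subnKC // -ltnS -subSn ?leq_subr //; case: n i => [[]|].
Qed.

Lemma jordan_mapZbase a c v : jordan_map (c *: a) v = c ^+ (n - 1) *: jordan_map a v.
Proof.
rewrite /jordan_map scaler_sumr; apply: eq_bigr => i _.
rewrite rpowZbase lpowZ lpowZbase scalerA -exprD.
by have -> : (n - 1 - i + i = n - 1)%N by have := ltn_ord i; lia.
Qed.

Lemma apowZ a c : (0 < n)%N -> apow mul (c *: a) n = c ^+ n *: apow mul a n.
Proof. by move=> n0; rewrite /apow lpowZbase lpowZ scalerA -exprSr prednK. Qed.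

Lemma jordan_map_0l v : (2 <= n)%N -> jordan_map 0 v = 0.
Proof.
move=> n2; rewrite /jordan_map big1 // => -[[|i] ? _].
  by rewrite subn0 (_ : n - 1 = (n - 2).+1)%N ?rpowS ?bmul0r //; lia.
by rewrite lpowS bmul0l.
Qed.

Lemma apow0 : apow mul 0 n = 0.
Proof. by rewrite /apow lpow0. Qed.

End BanachAlgebra.

Section DirectMethod.
Variables (R : realType) (A : completeNormedModType R[i]) (p theta : R) (f : A -> A).
Hypotheses (p01 : 0 < p < 1) (theta_ge0 : 0 <= theta).
Implicit Types (x y z : A) (k m : nat).

Definition scale2 k : R[i] := ((2 : R) ^+ k)%:C.
Definition dilate k x := (scale2 k)^-1 *: f (scale2 k *: x).
Definition ratio := 2 `^ p / (2 : R).
Definition hyers_limit x := lim (dilate ^~ x @ \oo).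
Definition hyers_const := 2 `^ p * theta / (2 - 2 `^ p).

Lemma scale2_neq0 k : scale2 k != 0.
Proof. by rewrite /scale2 (inj_eq (@complexI _)) expf_neq0. Qed.

Lemma scale2S k : scale2 k.+1 = 2%:R * scale2 k.
Proof. by rewrite /scale2 exprS rmorphM rmorph_nat. Qed.

Lemma nrm_scale2 k x : nrm (scale2 k *: x) = 2 ^+ k * nrm x.
Proof. by rewrite nrmZ_real ger0_norm // exprn_ge0. Qed.

Lemma nrm_scale2V k x : nrm ((scale2 k)^-1 *: x) = (2 ^+ k)^-1 * nrm x.
Proof. by rewrite /scale2 -fmorphV nrmZ_real ger0_norm // invr_ge0 exprn_ge0. Qed.

Lemma powR2_lt2 : 2 `^ p < (2 : R).
Proof.
rewrite /powR (negbTE (_ : (2 : R) != 0)) // -[X in _ < X]lnK ?posrE // ltr_expR.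
by case/andP: p01 => _ p1; rewrite gtr_pMl // ln_gt0 // ltr1n.
Qed.

Lemma ratio01 : 0 <= ratio < 1.
Proof. by rewrite /ratio divr_ge0 ?powR_ge0 //= ltr_pdivrMr // mul1r powR2_lt2. Qed.

Lemma ratio_neq1 : 1 - ratio != 0.
Proof. by rewrite subr_eq0 eq_sym lt_eqF //; case/andP: ratio01. Qed.

Lemma dilate_error k C x :
  (2 ^+ k)^-1 * (C * nrm (scale2 k *: x) `^ p) = C * nrm x `^ p * ratio ^+ k.
Proof.
have pow2 : ((2 : R) ^+ k) `^ p = (2 `^ p) ^+ k.
  by rewrite -powR_mulrn // -powRrM mulrC powRrM powR_mulrn // powR_ge0.
rewrite nrm_scale2 powRM ?exprn_ge0 ?nrm_ge0 // pow2 /ratio exprMn exprVn.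
by ring.
Qed.

Lemma nrm_scale2V_le k C x z : nrm z <= C * nrm (scale2 k *: x) `^ p ->
  nrm ((scale2 k)^-1 *: z) <= C * nrm x `^ p * ratio ^+ k.
Proof.
by move=> zC; rewrite nrm_scale2V -dilate_error ler_wpM2l // invr_ge0 exprn_ge0.
Qed.

Lemma dilate0 x : dilate 0 x = f x.
Proof. by rewrite /dilate /scale2 expr0 invr1 !scale1r. Qed.

Lemma hyers_const_ge0 : 0 <= hyers_const.
Proof. by rewrite divr_ge0 ?mulr_ge0 ?powR_ge0 // subr_ge0 ltW // powR2_lt2. Qed.

Lemma scalable_approx_unique (L1 L2 : A -> A) :
  (forall (c : R[i]) x, L1 (c *: x) = c *: L1 x) ->
  (forall (c : R[i]) x, L2 (c *: x) = c *: L2 x) ->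
  (forall x, nrm (f x - L1 x) <= hyers_const * nrm x `^ p) ->
  (forall x, nrm (f x - L2 x) <= hyers_const * nrm x `^ p) -> L1 = L2.
Proof.
move=> L1Z L2Z L1f L2f; apply: funext => x; apply/subr0_eq.
apply: (eq0_of_geometric_bound (C := 2 * hyers_const * nrm x `^ p) ratio01).
  by rewrite mulr_ge0 ?powR_ge0 // mulr_ge0 // hyers_const_ge0.
move=> k; set y := scale2 k *: x.
have -> : L1 x - L2 x = (scale2 k)^-1 *: ((L1 y - f y) + (f y - L2 y)).
  by rewrite addrA subrK L1Z L2Z -scalerBr scalerA mulVf ?scale1r ?scale2_neq0.
apply: nrm_scale2V_le; apply: le_trans (nrmD _ _) _.
by rewrite mulr_natl mulr2n mulrDl; apply: lerD; rewrite // nrm_distC.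
Qed.

Hypothesis f_double : forall y, nrm (f (y + y) - f y - f y) <= theta * nrm (y + y) `^ p.

Lemma nrm_dilateS_sub k x :
  nrm (dilate k.+1 x - dilate k x) <= theta * nrm x `^ p * ratio ^+ k.+1.
Proof.
set y := scale2 k *: x.
have xS : scale2 k.+1 *: x = y + y by rewrite scale2S -scalerA scaler_nat mulr2n.
have dilate_k : dilate k x = (scale2 k.+1)^-1 *: (f y + f y).
  rewrite /dilate -/y -mulr2n -scaler_nat scalerA scale2S invfM mulrAC.
  by rewrite mulVf ?mul1r // pnatr_eq0.
rewrite dilate_k /dilate -scalerBr opprD addrA; apply: nrm_scale2V_le.
by rewrite xS f_double.
Qed.

Lemma nrm_dilate_sub k m x : (k <= m)%N ->
  nrm (dilate m x - dilate k x) <= theta * nrm x `^ p * ratio ^+ k.+1 / (1 - ratio).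
Proof.
have [r0 r1] := andP ratio01; set B := theta * nrm x `^ p.
have B0 : 0 <= B by rewrite mulr_ge0 ?powR_ge0.
have telescope j : nrm (dilate (k + j) x - dilate k x)
    <= B * ratio ^+ k.+1 * (1 - ratio ^+ j) / (1 - ratio).
  elim: j => [|j IH]; first by rewrite addn0 subrr nrm0 expr0 subrr mulr0 mul0r.
  have -> : dilate (k + j.+1) x - dilate k x =
      (dilate (k + j).+1 x - dilate (k + j) x) + (dilate (k + j) x - dilate k x).
    by rewrite addnS addrA subrK.
  apply: le_trans (nrmD _ _) _; apply: le_trans (lerD (nrm_dilateS_sub _ _) IH) _.
  rewrite le_eqVlt; apply/orP; left; apply/eqP.
  by rewrite /B !exprS exprD; field; exact: ratio_neq1.
move=> km; rewrite -(subnKC km); apply: le_trans (telescope _) _.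
apply: ler_wpM2r; first by rewrite invr_ge0 subr_ge0 ltW.
rewrite -[leRHS]mulr1 ler_wpM2l ?mulr_ge0 ?exprn_ge0 ?powR_ge0 //.
by rewrite gerBl exprn_ge0.
Qed.

Lemma cvg_dilate x : dilate ^~ x @ \oo --> hyers_limit x.
Proof.
apply: nrm_cauchy_cvg => e e0; have [r0 r1] := andP ratio01.
have C0 : 0 <= theta * nrm x `^ p * ratio / (1 - ratio).
  by rewrite divr_ge0 ?mulr_ge0 ?powR_ge0 // subr_ge0 ltW.
have [N rN] := geometric_lt ratio01 C0 e0.
exists N => m Nm; apply: le_lt_trans (nrm_dilate_sub x Nm) _.
by have := rN N (leqnn N); rewrite exprS mulrA mulrAC.
Qed.

Lemma nrm_hyers_limit_sub k x :
  nrm (hyers_limit x - dilate k x) <= theta * nrm x `^ p * ratio ^+ k.+1 / (1 - ratio).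
Proof. by apply: (nrm_lim_le (m := k) (@cvg_dilate x)) => j; apply: nrm_dilate_sub. Qed.

Lemma nrm_hyers_limit_sub_geometric k m x : (k <= m.+1)%N ->
  nrm (hyers_limit x - dilate m x) <= theta * nrm x `^ p / (1 - ratio) * ratio ^+ k.
Proof.
have [r0 r1] := andP ratio01.
move=> km; apply: le_trans (nrm_hyers_limit_sub m x) _; rewrite mulrAC ler_wpM2l //.
  by rewrite divr_ge0 ?mulr_ge0 ?powR_ge0 // subr_ge0 ltW.
exact: (ler_wiXn2l r0 (ltW r1) km).
Qed.

Lemma nrm_sub_hyers_limit x : nrm (f x - hyers_limit x) <= hyers_const * nrm x `^ p.
Proof.
rewrite -(dilate0 x) nrm_distC; apply: le_trans (nrm_hyers_limit_sub 0 x) _.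
rewrite le_eqVlt; apply/orP; left; apply/eqP.
rewrite /hyers_const /ratio expr1; field.
by rewrite subr_eq0 gt_eqF // powR2_lt2.
Qed.

End DirectMethod.

Section Corollary.
Variables (R : realType) (A : completeNormedModType R[i]) (mul : A -> A -> A).
Variables (n : nat) (p theta : R) (f : A -> A).
Hypotheses (mul_banach : banach_algebra_mul mul) (n2 : (2 <= n)%N) (p01 : 0 < p < 1).
Hypothesis theta_ge0 : 0 <= theta.
Hypothesis f_approx : forall (mu : R[i]) (x y a : A), `|mu| = 1 ->
  nrm (mu *: f ((2%:R : R[i])^-1 *: (x + y)) + mu *: f ((2%:R : R[i])^-1 *: (x - y))
       - f (mu *: x) + f (apow mul a n) - jordan_sum mul n f a)
  <= theta * (nrm x `^ p + nrm y `^ p + nrm a `^ p).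
Implicit Types (x y b : A) (mu : R[i]).

Local Notation D := (hyers_limit f).

Lemma powR0p : (0 : R) `^ p = 0.
Proof. by rewrite powR0 // gt_eqF //; case/andP: p01. Qed.

Lemma halfDD x : (2%:R : R[i])^-1 *: (x + x) = x.
Proof. by rewrite -mulr2n -(scaler_nat 2 x) scalerA mulVf ?scale1r // pnatr_eq0. Qed.

Lemma f0 : f 0 = 0.
Proof.
have := f_approx 0 0 0 (normr1 _).
rewrite addr0 subrr scaler0 !scale1r apow0 // nrm0 powR0p !addr0 mulr0.
rewrite [jordan_sum _ _ _ _](jordan_map_0l mul_banach _ n2) subr0 addrK => /nrm_le0/eqP.
by rewrite -mulr2n -scaler_nat scaler_eq0 pnatr_eq0 => /eqP.
Qed.

Lemma f_cauchy_approx mu x y : `|mu| = 1 ->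
  nrm (mu *: f ((2%:R : R[i])^-1 *: (x + y)) + mu *: f ((2%:R : R[i])^-1 *: (x - y))
       - f (mu *: x)) <= theta * (nrm x `^ p + nrm y `^ p).
Proof.
move=> mu1; have := f_approx x y 0 mu1.
rewrite apow0 // f0 [jordan_sum _ _ _ _](jordan_map_0l mul_banach _ n2).
by rewrite addr0 subr0 nrm0 powR0p addr0.
Qed.

Lemma f_add_approx x y :
  nrm (f (x + y) - f x - f y) <= theta * (nrm (x + y) `^ p + nrm (x - y) `^ p).
Proof.
have := f_cauchy_approx (x + y) (x - y) (normr1 _); rewrite !scale1r.
rewrite addrACA subrr addr0.
rewrite (_ : x + y - (x - y) = y + y); last by rewrite opprB addrC addrA subrK.
by rewrite !halfDD -nrmN !opprB opprD addrA.
Qed.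

Lemma f_double y : nrm (f (y + y) - f y - f y) <= theta * nrm (y + y) `^ p.
Proof. by have := f_add_approx y y; rewrite subrr nrm0 powR0p addr0. Qed.

Lemma f_unit_approx mu x : `|mu| = 1 ->
  nrm (f (mu *: x) - mu *: f x) <= 2 * theta * nrm x `^ p.
Proof.
move=> mu1; have := f_cauchy_approx x x mu1.
rewrite halfDD subrr scaler0 f0 scaler0 addr0 nrm_distC.
by rewrite [2 * theta]mulrC -mulrA mulr_natl mulr2n.
Qed.

Lemma f_jordan_approx b :
  nrm (f (apow mul b n) - jordan_sum mul n f b) <= theta * nrm b `^ p.
Proof.
have := f_approx 0 0 b (normr1 _).
by rewrite addr0 subrr scaler0 !scale1r f0 addr0 subr0 add0r nrm0 powR0p !add0r.
Qed.

Lemma hyers_limit_additive : {morph D : x y / x + y}.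
Proof.
move=> x y; apply/subr0_eq.
have dev_cvg : (fun k => dilate f k (x + y) - (dilate f k x + dilate f k y)) @ \oo
    --> D (x + y) - (D x + D y).
  by apply: cvgB; [|apply: cvgD]; exact: (cvg_dilate p01 theta_ge0 f_double).
apply: (lim_eq0_of_geometric_bound dev_cvg (ratio01 p01)
  (C := theta * nrm (x + y) `^ p + theta * nrm (x - y) `^ p)).
  by rewrite addr_ge0 // mulr_ge0 // powR_ge0.
move=> k; rewrite /dilate -scalerDr -scalerBr opprD addrA nrm_scale2V.
rewrite [scale2 R k *: (x + y)]scalerDr.
apply: le_trans (ler_wpM2l _ (f_add_approx _ _)) _; first by rewrite invr_ge0 exprn_ge0.
by rewrite -scalerDr -scalerBr !mulrDr !dilate_error mulrDl.
Qed.

Lemma hyers_limit_unit mu x : `|mu| = 1 -> D (mu *: x) = mu *: D x.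
Proof.
move=> mu1; apply/subr0_eq.
have dev_cvg : (fun k => dilate f k (mu *: x) - mu *: dilate f k x) @ \oo
    --> D (mu *: x) - mu *: D x.
  by apply: cvgB; [|apply: cvgZl_tmp]; exact: (cvg_dilate p01 theta_ge0 f_double).
apply: (lim_eq0_of_geometric_bound dev_cvg (ratio01 p01)
  (C := 2 * theta * nrm x `^ p)); first by rewrite !mulr_ge0 ?powR_ge0.
move=> k; rewrite /dilate [mu *: (_ *: _)]scalerA mulrC -scalerA -scalerBr.
rewrite [scale2 R k *: (mu *: x)]scalerA mulrC -scalerA; apply: nrm_scale2V_le.
exact: f_unit_approx.
Qed.

Lemma hyers_limit_linear (c : R[i]) x y : D (c *: x + y) = c *: D x + D y.
Proof.
apply: linear_of_additive_unit_homogeneous => [|mu {}x]; first exact: hyers_limit_additive.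
exact: hyers_limit_unit.
Qed.

Lemma dilate_jordan_sub k b : nrm (dilate f (k * n) (apow mul b n)
    - jordan_map mul n b (dilate f k b)) <= theta * nrm b `^ p * ratio p ^+ k.
Proof.
have n0 : (0 < n)%N by lia.
set s := scale2 R k.
have s_n : scale2 R (k * n) = s ^+ n by rewrite /s /scale2 exprM rmorphXn.
have -> : dilate f (k * n) (apow mul b n) = (scale2 R (k * n))^-1 *: f (apow mul (s *: b) n).
  by rewrite /dilate s_n apowZ.
have -> : jordan_map mul n b (dilate f k b)
    = (scale2 R (k * n))^-1 *: jordan_sum mul n f (s *: b).
  rewrite /dilate jordan_mapZ // [jordan_sum _ _ _ _]jordan_mapZbase // scalerA s_n.
  congr (_ *: _); rewrite -[in s ^+ n](subnK n0) exprD expr1 invfM mulrAC.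
  by rewrite mulVf ?mul1r // expf_neq0 // scale2_neq0.
rewrite -scalerBr nrm_scale2V.
apply: le_trans (ler_wpM2l _ (f_jordan_approx _)) _; first by rewrite invr_ge0 exprn_ge0.
rewrite -dilate_error ler_wpM2r ?mulr_ge0 ?powR_ge0 //.
by rewrite lef_pV2 ?posrE ?exprn_gt0 // ler_eXn2l ?ltr1n // leq_pmulr.
Qed.

Lemma hyers_limit_jordan b : D (apow mul b n) = jordan_map mul n b (D b).
Proof.
have [r0 r1] := andP (ratio01 p01).
pose Cr x := theta * nrm x `^ p / (1 - ratio p).
have Cr_ge0 x : 0 <= Cr x by rewrite divr_ge0 ?mulr_ge0 ?powR_ge0 // subr_ge0 ltW.
apply/subr0_eq; apply: (eq0_of_geometric_bound (ratio01 p01)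
  (C := Cr (apow mul b n) + theta * nrm b `^ p + n%:R * nrm b ^+ (n - 1) * Cr b)).
  by rewrite !addr_ge0 ?Cr_ge0 // ?mulr_ge0 ?powR_ge0 ?exprn_ge0 ?nrm_ge0 // invr_ge0 subr_ge0 ltW.
move=> k; have approx := nrm_hyers_limit_sub_geometric p01 theta_ge0 f_double.
have -> : D (apow mul b n) - jordan_map mul n b (D b)
    = (D (apow mul b n) - dilate f (k * n) (apow mul b n))
      + (dilate f (k * n) (apow mul b n) - jordan_map mul n b (dilate f k b))
      - jordan_map mul n b (D b - dilate f k b).
  by rewrite jordan_mapB // opprB !addrA subrK addrNK.
apply: le_trans (nrmD3 _ _ _) _; rewrite nrmN !mulrDl; apply: lerD; first apply: lerD.
- by apply: approx; apply/leqW/leq_pmulr; lia.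
- exact: dilate_jordan_sub.
- apply: le_trans (nrm_jordan_map mul_banach n _ _) _.
  rewrite -[leRHS]mulrA; apply: ler_wpM2l; last exact: approx.
  by rewrite mulr_ge0 ?exprn_ge0 ?nrm_ge0.
Qed.

End Corollary.

Theorem corollary2p3 (R : realType) (A : completeNormedModType R[i])
    (mul : A -> A -> A) (n : nat) (p theta : R) (f : A -> A) :
  banach_algebra_mul mul ->
  (2 <= n)%N ->
  0 < p < 1 ->
  0 <= theta ->
  (forall (mu : R[i]) (x y a : A), `|mu| = 1 ->
     nrm (mu *: f ((2%:R : R[i])^-1 *: (x + y))
          + mu *: f ((2%:R : R[i])^-1 *: (x - y))
          - f (mu *: x)
          + f (apow mul a n)
          - jordan_sum mul n f a)
     <= theta * (nrm x `^ p + nrm y `^ p + nrm a `^ p)) ->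
  exists D : A -> A,
    [/\ n_jordan_derivation mul n D,
        (forall x, nrm (f x - D x)
                   <= (2 `^ p * theta) / (2 - 2 `^ p) * nrm x `^ p)
      & (forall D' : A -> A, n_jordan_derivation mul n D' ->
           (forall x, nrm (f x - D' x)
                      <= (2 `^ p * theta) / (2 - 2 `^ p) * nrm x `^ p) ->
           D' = D)].
Proof.
move=> mul_banach n2 p01 theta_ge0 f_approx.
have D_lin := hyers_limit_linear mul_banach n2 p01 theta_ge0 f_approx.
have D_approx := nrm_sub_hyers_limit p01 theta_ge0 (f_double mul_banach n2 p01 f_approx).
exists (hyers_limit f); split => //.
  by split => // b; exact: hyers_limit_jordan mul_banach n2 p01 theta_ge0 f_approx b.
move=> D' [D'_lin _] D'_approx.
apply: (scalable_approx_unique (f := f) p01 theta_ge0) => //.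
  exact: scalable_of_linear D'_lin.
exact: scalable_of_linear D_lin.
Qed.
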